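(* Let $n\ge6$ be even, let $\varrho:G_n\to\mathcal L$ be a homomorphism and let $p,q\in\overline{\mathrm B}W$. Then $\mathrm{Area}_n(p,q;\varrho)=\mathrm{Area}_1(\varrho(w_1)q,\,p;\varrho)$.
   Context: Let $W$ be a 2-dimensional complex vector space with a hermitian form $\langle\cdot,\cdot\rangle$ of signature $(+,-)$. In $\mathbb{CP}W$ let $\mathrm BW$ be the negative points (the Poincaré disc, curvature $-1$, oriented by its complex structure), $\mathrm SW$ the isotropic points, $\overline{\mathrm B}W=\mathrm BW\cup\mathrm SW$; $\mathcal L=\mathrm{PU}(W)$ is the group of orientation-preserving isometries of $\mathrm BW$. Oriented triangle area: $\mathrm{Area}\,\Delta(p_1,p_2,p_3)=2\arg(-\langle p_1,p_2\rangle\langle p_2,p_3\rangle\langle p_3,p_1\rangle)$ ($\arg\in[-\pi,\pi]$) if no two vertices are equal isotropic points, $0$ otherwise. $\mathrm{Area}(p_1,\dots,p_m):=\sum_{k=1}^m\mathrm{Area}\,\Delta(c,p_k,p_{k+1})$ (indices mod $m$), independent of $c\in\overline{\mathrm B}W$. $H_n$ is the group generated by $r_1,\dots,r_n$ with relations $r_i^2=1$, $r_n\cdots r_1=1$, indices mod $n$; for even $n$, $G_n\le H_n$ is the index-2 subgroup of words of even length in the $r_i$. $S$ is the automorphism of $H_n$ with $Sr_i=r_{i+1}$ (it preserves $G_n$). Put $v_i:=r_i\cdots r_2r_1$ for $0\le i\le n-1$ ($v_0=1$); for $0\le i\le n-2$ put $w_i:=v_i$ if $i$ is even and $w_i:=v_ir_n$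 if $i$ is odd, and $w_{i+n-1}:=r_nw_ir_n$; indices of the $w_i$ are mod $2n-2$. All $w_i\in G_n$. For $x\in\overline{\mathrm B}W$ write $w_ix$ for $\varrho(w_i)x$. Define $\mathrm{Area}_n(p,q;\varrho):=\mathrm{Area}(w_0p,w_1q,w_2p,w_3q,\dots,w_{2n-4}p,w_{2n-3}q)$ (the $2n-2$ points $w_jx_j$, $x_j=p$ for even $j$, $x_j=q$ for odd $j$), and for $1\le i\le n$, $\mathrm{Area}_i(p,q;\varrho):=\mathrm{Area}_n(p,q;\varrho\circ S^i)$. *)

From Stdlib Require Import Bool Reals Lra Lia List Relations.
Open Scope bool_scope.
From Coquelicot Require Import Coquelicot.
Import ListNotations.
Open Scope R_scope.

Definition vec := (C * C)%type.

Definition herm (z w : vec) : C :=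
  Cminus (Cmult (fst z) (Cconj (fst w))) (Cmult (snd z) (Cconj (snd w))).

(* the point [v] of CP W lies in closed ball  B W U S W *)
Definition inBbar (v : vec) : Prop := v <> (RtoC 0, RtoC 0) /\ Re (herm v v) <= 0.

Definition isotropicb (v : vec) : bool :=
  if Req_EM_T (Re (herm v v)) 0 then true else false.

(* [u] = [v] in CP W  (u, v nonzero): linear dependence, det(u,v) = 0 *)
Definition proj_eqb (u v : vec) : bool :=
  let d := Cminus (Cmult (fst u) (snd v)) (Cmult (snd u) (fst v)) in
  if Req_EM_T (Re d) 0 then if Req_EM_T (Im d) 0 then true else false else false.

(* principal argument, values in (-PI, PI]; arg 0 = 0 *)
Definition arg (z : C) : R :=
  let x := Re z in let y := Im z in
  if Rlt_dec 0 x then atan (y / x)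
  else if Rlt_dec x 0 then
         (if Rle_dec 0 y then atan (y / x) + PI else atan (y / x) - PI)
  else if Rlt_dec 0 y then PI / 2
  else if Rlt_dec y 0 then - (PI / 2)
  else 0.

Definition eq_iso (u v : vec) : bool := isotropicb u && isotropicb v && proj_eqb u v.

Definition triArea (p1 p2 p3 : vec) : R :=
  if eq_iso p1 p2 || eq_iso p2 p3 || eq_iso p3 p1 then 0
  else 2 * arg (Copp (Cmult (Cmult (herm p1 p2) (herm p2 p3)) (herm p3 p1))).

Definition polyArea (c : vec) (ps : list vec) : R :=
  let m := length ps in
  fold_right Rplus 0
    (map (fun k => triArea c (nth k ps (RtoC 0, RtoC 0)) (nth ((k + 1) mod m)%nat ps (RtoC 0, RtoC 0)))
         (seq 0 m)).

Record M2 := mkM2 { m11 : C; m12 : C; m21 : C; m22 : C }.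

Definition act (A : M2) (v : vec) : vec :=
  (Cplus (Cmult (m11 A) (fst v)) (Cmult (m12 A) (snd v)),
   Cplus (Cmult (m21 A) (fst v)) (Cmult (m22 A) (snd v))).

Definition mmul (A B : M2) : M2 :=
  mkM2 (Cplus (Cmult (m11 A) (m11 B)) (Cmult (m12 A) (m21 B)))
       (Cplus (Cmult (m11 A) (m12 B)) (Cmult (m12 A) (m22 B)))
       (Cplus (Cmult (m21 A) (m11 B)) (Cmult (m22 A) (m21 B)))
       (Cplus (Cmult (m21 A) (m12 B)) (Cmult (m22 A) (m22 B))).

Definition mscale (l : C) (A : M2) : M2 :=
  mkM2 (Cmult l (m11 A)) (Cmult l (m12 A)) (Cmult l (m21 A)) (Cmult l (m22 A)).

Definition mid : M2 := mkM2 (RtoC 1) (RtoC 0) (RtoC 0) (RtoC 1).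

Definition unitaryW (A : M2) : Prop := forall x y, herm (act A x) (act A y) = herm x y.

(* equality in PU(W) = U(W) / scalars *)
Definition peq (A B : M2) : Prop := exists l : C, l <> RtoC 0 /\ A = mscale l B.

(* A word is a list of letters; letter i stands for r_(i mod n) (so r_0 = r_n). *)
Definition word := list nat.

Definition relword (n : nat) : word := rev (seq 1 n).

Inductive Hstep (n : nat) : word -> word -> Prop :=
| Hstep_sq  : forall u v i, Hstep n (u ++ [i; i] ++ v) (u ++ v)
| Hstep_rel : forall u v, Hstep n (u ++ relword n ++ v) (u ++ v)
| Hstep_mod : forall u v i, Hstep n (u ++ [i] ++ v) (u ++ [i mod n] ++ v).

Definition Hequiv (n : nat) : word -> word -> Prop := clos_refl_sym_trans word (Hstep n).

Definition evenw (w : word) : Prop := Nat.Even (length w).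

(* rho : G_n -> PU(W) a homomorphism, given on even-length words by
   matrix lifts in U(W), compatible (up to scalars) with the relations of H_n
   and multiplicative up to scalars. *)
Definition is_Grep (n : nat) (rho : word -> M2) : Prop :=
  (forall w, evenw w -> unitaryW (rho w)) /\
  peq (rho []) mid /\
  (forall u v, evenw u -> evenw v -> peq (rho (u ++ v)) (mmul (rho u) (rho v))) /\
  (forall u v, evenw u -> Hequiv n u v -> peq (rho u) (rho v)).

(* rho o S^i, where S r_j = r_(j+1) *)
Definition rhoS (i : nat) (rho : word -> M2) : word -> M2 :=
  fun w => rho (map (fun j => (j + i)%nat) w).

Definition vword (i : nat) : word := rev (seq 1 i).

Definition wbase (n i : nat) : word :=
  if Nat.even i then vword i else vword i ++ [n].

Definition wword (n j : nat) : word :=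
  let k := (j mod (2 * n - 2))%nat in
  if Nat.leb k (n - 2)%nat then wbase n k else [n] ++ wbase n (k - (n - 1))%nat ++ [n].

Definition Apoints (n : nat) (rho : word -> M2) (p q : vec) : list vec :=
  map (fun j => act (rho (wword n j)) (if Nat.even j then p else q)) (seq 0 (2 * n - 2)%nat).

Definition Area_n (c : vec) (n : nat) (rho : word -> M2) (p q : vec) : R :=
  polyArea c (Apoints n rho p q).

Definition Area_i (c : vec) (i n : nat) (rho : word -> M2) (p q : vec) : R :=
  Area_n c n (rhoS i rho) p q.

From Stdlib Require Import Reals Lra Lia Bool Relations Setoid.
From Coquelicot Require Import Coquelicot.
From Stdlib Require Import List. (* after Coquelicot, whose [Forall] would shadow it *)
Import ListNotations.
Open Scope R_scope.

(* In the chart [a = v1 / v2] of the closed disc, [- <x, y>] is [x2 conj(y2) (1 - a conj b)].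
   The three factors [1 - a conj b] of a triangle lie in the right half plane and, by a
   Cauchy-Schwarz estimate, so does their product; hence their arguments add, and the area of
   a triangle, hence of a polygon, is a sum over its edges of [2 arg (1 - a conj b)],
   independent of the base point and invariant under PU(W).
   Let [P_k = w_k x_k] be the vertices of [Area_n(p, q)].  In [G_n], [S(w_k)] equals
   [w_(k+1)] up to a factor [w_1] on the right when [k] is even, and also on the left when
   [k >= n - 1]; so the vertices of [Area_1(w_1 q, p)] are, as points of CP W,
   [P_1, ..., P_(n-1), w_1 P_n, ..., w_1 P_(2n-2) = w_1 P_0].  This is the polygon [P] cut
   along its diagonal [P_0 P_(n-1)], with the far half moved by [w_1], which sends
   [P_(n-1) ~ q] to [P_1 = w_1 q] and [P_n] to [P_0 ~ p], and glued back along [P_1 P_0]. *)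

(** * Arguments of complex numbers *)

Lemma arg_Re_pos x y : 0 < x -> arg (x, y) = atan (y / x).
Proof. intros H. unfold arg; simpl. destruct (Rlt_dec 0 x); [reflexivity | lra]. Qed.

Lemma arg_0 : arg (RtoC 0) = 0.
Proof.
  unfold arg, RtoC; simpl.
  destruct (Rlt_dec 0 0); [lra|]. destruct (Rlt_dec 0 0); [lra|].
  destruct (Rlt_dec 0 0); [lra|]. destruct (Rlt_dec 0 0); [lra | reflexivity].
Qed.

Lemma arg_scale_pos K z : 0 < K -> arg (Cmult (RtoC K) z) = arg z.
Proof.
  intros HK. destruct z as [x y].
  replace (Cmult (RtoC K) (x, y)) with (K * x, K * y)
    by (unfold Cmult, RtoC; simpl; f_equal; ring).
  unfold arg; simpl.
  assert (E : x <> 0 -> K * y / (K * x) = y / x) by (intros; field; lra).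
  destruct (Rlt_dec 0 (K * x)); destruct (Rlt_dec 0 x); try (exfalso; nra).
  - rewrite E; lra.
  - destruct (Rlt_dec (K * x) 0); destruct (Rlt_dec x 0); try (exfalso; nra).
    + rewrite E by lra.
      destruct (Rle_dec 0 (K * y)); destruct (Rle_dec 0 y); try (exfalso; nra); reflexivity.
    + destruct (Rlt_dec 0 (K * y)); destruct (Rlt_dec 0 y); try (exfalso; nra); try reflexivity.
      destruct (Rlt_dec (K * y) 0); destruct (Rlt_dec y 0); try (exfalso; nra); reflexivity.
Qed.

Lemma arg_conj_Re_pos z : 0 < fst z -> arg (Cconj z) = - arg z.
Proof.
  destruct z as [x y]; unfold Cconj; simpl; intros H.
  rewrite !arg_Re_pos by lra. rewrite <- atan_opp. f_equal. field. lra.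
Qed.

Lemma arg_Re_pos_bound x y : 0 < x -> - (PI / 2) < arg (x, y) < PI / 2.
Proof. intros H. rewrite arg_Re_pos by lra. pose proof (atan_bound (y / x)). lra. Qed.

Lemma polar_Re_pos x y : 0 < x ->
  exists r, 0 < r /\ x = r * cos (arg (x, y)) /\ y = r * sin (arg (x, y)).
Proof.
  intros H. rewrite arg_Re_pos, cos_atan, sin_atan by lra.
  assert (Hs : 0 < sqrt (1 + (y / x)²))
    by (apply sqrt_lt_R0; pose proof (Rle_0_sqr (y / x)); lra).
  exists (x * sqrt (1 + (y / x)²)). split; [nra|]. split; field; lra.
Qed.

Lemma arg_polar r s : 0 < r -> - (PI / 2) <= s <= PI / 2 -> arg (r * cos s, r * sin s) = s.
Proof.
  intros Hr Hs.
  destruct (Req_dec s (PI / 2)) as [->|E].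
  { rewrite cos_PI2, sin_PI2. unfold arg; simpl.
    destruct (Rlt_dec 0 (r * 0)); [lra|]. destruct (Rlt_dec (r * 0) 0); [lra|].
    destruct (Rlt_dec 0 (r * 1)); [reflexivity | lra]. }
  destruct (Req_dec s (- (PI / 2))) as [->|E'].
  { rewrite cos_neg, sin_neg, cos_PI2, sin_PI2. unfold arg; simpl.
    repeat match goal with |- context [Rlt_dec ?a ?b] => destruct (Rlt_dec a b) end; lra. }
  assert (Hc : 0 < cos s) by (apply cos_gt_0; lra).
  rewrite arg_Re_pos by nra.
  replace (r * sin s / (r * cos s)) with (tan s) by (unfold tan; field; lra).
  apply atan_tan; lra.
Qed.

(* The arguments add up because the factors lie in the open, and the product in the closed,
   right half plane. *)
Lemma arg_mult3 (w1 w2 w3 : C) :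
  0 < fst w1 -> 0 < fst w2 -> 0 < fst w3 -> 0 <= fst (Cmult (Cmult w1 w2) w3) ->
  arg (Cmult (Cmult w1 w2) w3) = arg w1 + arg w2 + arg w3.
Proof.
  destruct w1 as [x1 y1], w2 as [x2 y2], w3 as [x3 y3]; intros H1 H2 H3 Hp; simpl in H1, H2, H3.
  pose proof (arg_Re_pos_bound x1 y1 H1). pose proof (arg_Re_pos_bound x2 y2 H2).
  pose proof (arg_Re_pos_bound x3 y3 H3).
  destruct (polar_Re_pos x1 y1 H1) as (r1 & R1 & E1 & F1).
  destruct (polar_Re_pos x2 y2 H2) as (r2 & R2 & E2 & F2).
  destruct (polar_Re_pos x3 y3 H3) as (r3 & R3 & E3 & F3).
  set (t1 := arg (x1, y1)) in *. set (t2 := arg (x2, y2)) in *. set (t3 := arg (x3, y3)) in *.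
  assert (EP : Cmult (Cmult (x1, y1) (x2, y2)) (x3, y3)
               = (r1 * r2 * r3 * cos (t1 + t2 + t3), r1 * r2 * r3 * sin (t1 + t2 + t3))).
  { rewrite E1, F1, E2, F2, E3, F3. unfold Cmult; simpl.
    rewrite !cos_plus, !sin_plus. f_equal; rewrite ?cos_plus, ?sin_plus; ring. }
  rewrite EP in Hp |- *. simpl in Hp.
  assert (Rp : 0 < r1 * r2 * r3) by (repeat apply Rmult_lt_0_compat; lra).
  assert (Hc : 0 <= cos (t1 + t2 + t3)) by nra.
  apply arg_polar; [exact Rp|]. split.
  - destruct (Rle_dec (- (PI / 2)) (t1 + t2 + t3)); [assumption|]. exfalso.
    assert (cos (- (t1 + t2 + t3)) < 0) by (apply cos_lt_0; lra). rewrite cos_neg in *. lra.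
  - destruct (Rle_dec (t1 + t2 + t3) (PI / 2)); [assumption|]. exfalso.
    assert (cos (t1 + t2 + t3) < 0) by (apply cos_lt_0; lra). lra.
Qed.

(** * Triangle areas in the disc chart *)

Definition in_disk (a : C) : Prop := fst a * fst a + snd a * snd a <= 1.

Definition chart_form (a b : C) : C :=
  (1 - (fst a * fst b + snd a * snd b), fst a * snd b - snd a * fst b).

Lemma chart_form_eq a b : chart_form a b = Cminus (RtoC 1) (Cmult a (Cconj b)).
Proof.
  destruct a, b; unfold chart_form, Cminus, Cplus, Copp, Cmult, Cconj, RtoC; simpl.
  f_equal; ring.
Qed.

Lemma chart_form_swap a b : chart_form b a = Cconj (chart_form a b).
Proof. destruct a, b; unfold chart_form, Cconj; simpl; f_equal; ring. Qed.

Lemma chart_form_Re_pos_or_diag a b : in_disk a -> in_disk b ->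
  0 < fst (chart_form a b) \/ (a = b /\ chart_form a b = RtoC 0).
Proof.
  destruct a as [a1 a2], b as [b1 b2]; unfold in_disk, chart_form, RtoC; simpl; intros Ha Hb.
  destruct (Rlt_dec 0 (1 - (a1 * b1 + a2 * b2))) as [H|H]; [left; exact H | right].
  assert (Hs : (a1 - b1) * (a1 - b1) + (a2 - b2) * (a2 - b2) <= 0) by nra.
  assert (a1 = b1 /\ a2 = b2) as [-> ->].
  { pose proof (Rle_0_sqr (a1 - b1)); pose proof (Rle_0_sqr (a2 - b2)); unfold Rsqr in *.
    split; nra. }
  split; [reflexivity | f_equal; nra].
Qed.

Lemma dot_le_norm_mult a1 a2 b1 b2 :
  a1 * b1 + a2 * b2 <= sqrt (a1 * a1 + a2 * a2) * sqrt (b1 * b1 + b2 * b2).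
Proof.
  rewrite <- sqrt_mult by nra.
  destruct (Rle_dec (a1 * b1 + a2 * b2) 0).
  { pose proof (sqrt_pos ((a1 * a1 + a2 * a2) * (b1 * b1 + b2 * b2))). lra. }
  rewrite <- (sqrt_square (a1 * b1 + a2 * b2)) at 1 by lra.
  apply sqrt_le_1_alt. pose proof (Rle_0_sqr (a1 * b2 - a2 * b1)); unfold Rsqr in *. nra.
Qed.

(* Writing A, B, C for the moduli, the real part is
   1 - A²B²C² - Σ (a·b)(1 - C²) >= (1 - AB)(1 - BC)(1 - CA) >= 0,
   using a·b <= AB (Cauchy-Schwarz) three times. *)
Lemma Re_chart_form3_nonneg a b c : in_disk a -> in_disk b -> in_disk c ->
  0 <= fst (Cmult (Cmult (chart_form a b) (chart_form b c)) (chart_form c a)).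
Proof.
  destruct a as [a1 a2], b as [b1 b2], c as [c1 c2];
    unfold in_disk, chart_form, Cmult; simpl; intros Ha Hb Hc.
  pose proof (dot_le_norm_mult a1 a2 b1 b2) as H1.
  pose proof (dot_le_norm_mult b1 b2 c1 c2) as H2.
  pose proof (dot_le_norm_mult c1 c2 a1 a2) as H3.
  set (A2 := a1 * a1 + a2 * a2) in *. set (B2 := b1 * b1 + b2 * b2) in *.
  set (C2 := c1 * c1 + c2 * c2) in *.
  set (A := sqrt A2) in *. set (B := sqrt B2) in *. set (C := sqrt C2) in *.
  assert (A0 : 0 <= A) by apply sqrt_pos. assert (B0 : 0 <= B) by apply sqrt_pos.
  assert (C0 : 0 <= C) by apply sqrt_pos.
  assert (AA : A * A = A2) by (apply sqrt_sqrt; unfold A2; nra).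
  assert (BB : B * B = B2) by (apply sqrt_sqrt; unfold B2; nra).
  assert (CC : C * C = C2) by (apply sqrt_sqrt; unfold C2; nra).
  match goal with |- 0 <= ?e =>
    replace e with (1 - A2 * B2 * C2 - (a1 * b1 + a2 * b2) * (1 - C2)
                    - (b1 * c1 + b2 * c2) * (1 - A2) - (c1 * a1 + c2 * a2) * (1 - B2))
      by (unfold A2, B2, C2; ring) end.
  assert (P1 : 0 <= (A * B - (a1 * b1 + a2 * b2)) * (1 - C2)) by (apply Rmult_le_pos; nra).
  assert (P2 : 0 <= (B * C - (b1 * c1 + b2 * c2)) * (1 - A2)) by (apply Rmult_le_pos; nra).
  assert (P3 : 0 <= (C * A - (c1 * a1 + c2 * a2)) * (1 - B2)) by (apply Rmult_le_pos; nra).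
  assert (P4 : 0 <= (1 - A * B) * (1 - B * C) * (1 - C * A)) by (repeat apply Rmult_le_pos; nra).
  rewrite <- AA, <- BB, <- CC in *. nra.
Qed.

Lemma arg_chart_form_swap a b : in_disk a -> in_disk b ->
  arg (chart_form a b) + arg (chart_form b a) = 0.
Proof.
  intros Ha Hb. rewrite (chart_form_swap a b).
  destruct (chart_form_Re_pos_or_diag a b Ha Hb) as [H | [_ ->]].
  - rewrite arg_conj_Re_pos by exact H. ring.
  - replace (Cconj (RtoC 0)) with (RtoC 0) by (unfold Cconj, RtoC; simpl; f_equal; ring).
    rewrite arg_0. ring.
Qed.

Lemma arg_chart_form3_diag a c : in_disk a -> in_disk c -> chart_form a a = RtoC 0 ->
  arg (Cmult (Cmult (chart_form a a) (chart_form a c)) (chart_form c a))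
  = arg (chart_form a a) + arg (chart_form a c) + arg (chart_form c a).
Proof.
  intros Ha Hc H0. rewrite H0, !Cmult_0_l, arg_0.
  pose proof (arg_chart_form_swap a c Ha Hc). lra.
Qed.

Lemma arg_chart_form3 a b c : in_disk a -> in_disk b -> in_disk c ->
  arg (Cmult (Cmult (chart_form a b) (chart_form b c)) (chart_form c a))
  = arg (chart_form a b) + arg (chart_form b c) + arg (chart_form c a).
Proof.
  intros Ha Hb Hc.
  assert (Rot : forall w1 w2 w3 : C, Cmult (Cmult w1 w2) w3 = Cmult (Cmult w2 w3) w1)
    by (intros; ring).
  destruct (chart_form_Re_pos_or_diag a b Ha Hb) as [P1 | [<- Z]].
  2: { apply arg_chart_form3_diag; assumption. }
  destruct (chart_form_Re_pos_or_diag b c Hb Hc) as [P2 | [<- Z]].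
  2: { rewrite Rot, arg_chart_form3_diag by assumption. lra. }
  destruct (chart_form_Re_pos_or_diag c a Hc Ha) as [P3 | [<- Z]].
  2: { rewrite <- Rot, arg_chart_form3_diag by assumption. lra. }
  apply arg_mult3; try assumption. apply Re_chart_form3_nonneg; assumption.
Qed.

Lemma inBbar_snd_neq0 v : inBbar v -> snd v <> RtoC 0.
Proof.
  destruct v as [[x1 y1] [x2 y2]];
    unfold inBbar, herm, Cminus, Cplus, Copp, Cmult, Cconj, Re, RtoC; simpl.
  intros [Hn Hr] E. injection E as -> ->.
  apply Hn. f_equal; unfold RtoC; f_equal; nra.
Qed.

Definition chart (v : vec) : C := Cdiv (fst v) (snd v).

Definition edge_area (x y : vec) : R := 2 * arg (chart_form (chart x) (chart y)).

Lemma chart_in_disk v : inBbar v -> in_disk (chart v).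
Proof.
  intros Hv. pose proof (inBbar_snd_neq0 v Hv) as H2. destruct Hv as [_ Hr]. revert H2 Hr.
  destruct v as [[x1 y1] [x2 y2]];
    unfold in_disk, chart, Cdiv, Cinv, herm, Cminus, Cplus, Copp, Cmult, Cconj, Re, RtoC; simpl.
  intros H2 Hr.
  assert (D : 0 < x2 * x2 + y2 * y2).
  { destruct (Rlt_dec 0 (x2 * x2 + y2 * y2)) as [|N]; [assumption|].
    exfalso. apply H2. f_equal; nra. }
  match goal with |- ?e <= 1 =>
    replace e with ((x1 * x1 + y1 * y1) / (x2 * x2 + y2 * y2)) by (field; lra) end.
  apply Rmult_le_reg_r with (x2 * x2 + y2 * y2); [lra|].
  unfold Rdiv. rewrite Rmult_assoc, Rinv_l by lra. nra.
Qed.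

Lemma Cconj_neq0 z : z <> RtoC 0 -> Cconj z <> RtoC 0.
Proof.
  intros H E. apply H. rewrite <- (Cconj_conj z), E.
  unfold Cconj, RtoC; simpl. f_equal; ring.
Qed.

Lemma herm_chart x y : snd x <> RtoC 0 -> snd y <> RtoC 0 ->
  herm x y = Copp (Cmult (Cmult (snd x) (Cconj (snd y))) (chart_form (chart x) (chart y))).
Proof.
  intros Hx Hy. pose proof (Cconj_neq0 _ Hy).
  rewrite chart_form_eq. unfold chart, herm. rewrite Cdiv_conj by exact Hy.
  field. auto.
Qed.

Lemma arg_herm3 x y z : inBbar x -> inBbar y -> inBbar z ->
  arg (Copp (Cmult (Cmult (herm x y) (herm y z)) (herm z x)))
  = arg (Cmult (Cmult (chart_form (chart x) (chart y)) (chart_form (chart y) (chart z)))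
               (chart_form (chart z) (chart x))).
Proof.
  intros Hx Hy Hz.
  pose proof (inBbar_snd_neq0 x Hx) as X. pose proof (inBbar_snd_neq0 y Hy) as Y.
  pose proof (inBbar_snd_neq0 z Hz) as Z.
  rewrite !herm_chart by assumption.
  set (w := Cmult (Cmult (chart_form (chart x) (chart y)) (chart_form (chart y) (chart z)))
                  (chart_form (chart z) (chart x))).
  match goal with |- arg ?e = _ =>
    replace e with (Cmult (Cmult (Cmult (Cmult (snd x) (Cconj (snd x)))
                                        (Cmult (snd y) (Cconj (snd y))))
                                 (Cmult (snd z) (Cconj (snd z)))) w)
      by (unfold w; ring) end.
  rewrite <- !Cmod2_conj, <- !RtoC_mult.
  apply arg_scale_pos.
  apply Cmod_gt_0 in X, Y, Z.
  apply Rmult_lt_0_compat; [apply Rmult_lt_0_compat|]; apply pow_lt; assumption.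
Qed.

Lemma chart_eq_det0 x y : snd x <> RtoC 0 -> snd y <> RtoC 0 ->
  Cminus (Cmult (fst x) (snd y)) (Cmult (snd x) (fst y)) = RtoC 0 -> chart x = chart y.
Proof.
  intros X Y D. unfold chart.
  set (d := Cminus (Cmult (fst x) (snd y)) (Cmult (snd x) (fst y))) in D.
  replace (fst y) with (Cminus (Cdiv (Cmult (fst x) (snd y)) (snd x)) (Cdiv d (snd x)))
    by (unfold d; field; exact X).
  rewrite D. field. auto.
Qed.

Lemma chart_form_diag_isotropic x : snd x <> RtoC 0 -> Re (herm x x) = 0 ->
  chart_form (chart x) (chart x) = RtoC 0.
Proof.
  intros X Hiso. rewrite herm_chart, <- Cmod2_conj in Hiso by exact X.
  assert (Hm : 0 < Cmod (snd x) ^ 2) by (apply pow_lt, Cmod_gt_0, X).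
  revert Hiso Hm. destruct (chart x) as [a1 a2].
  unfold chart_form, Cmult, Copp, RtoC, Re; simpl. intros Hiso Hm.
  f_equal; [nra | ring].
Qed.

Lemma chart_form_eq_iso x y : inBbar x -> inBbar y -> eq_iso x y = true ->
  chart_form (chart x) (chart y) = RtoC 0.
Proof.
  intros Hx Hy H. unfold eq_iso in H.
  apply andb_prop in H as [[Hix _]%andb_prop Hp].
  unfold isotropicb in Hix. destruct (Req_EM_T (Re (herm x x)) 0) as [Hiso|]; [|discriminate].
  unfold proj_eqb in Hp. destruct (Req_EM_T _ 0) as [D1|]; [|discriminate].
  destruct (Req_EM_T _ 0) as [D2|]; [|discriminate].
  pose proof (inBbar_snd_neq0 x Hx) as X. pose proof (inBbar_snd_neq0 y Hy) as Y.
  assert (Same : chart x = chart y).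
  { apply chart_eq_det0; [exact X | exact Y |].
    revert D1 D2. destruct (Cminus _ _). simpl. intros -> ->. reflexivity. }
  rewrite <- Same. apply chart_form_diag_isotropic; assumption.
Qed.

Lemma herm_eq_iso x y : inBbar x -> inBbar y -> eq_iso x y = true -> herm x y = RtoC 0.
Proof.
  intros Hx Hy H.
  rewrite herm_chart, chart_form_eq_iso by auto using inBbar_snd_neq0. ring.
Qed.

Lemma triArea_herm x y z : inBbar x -> inBbar y -> inBbar z ->
  triArea x y z = 2 * arg (Copp (Cmult (Cmult (herm x y) (herm y z)) (herm z x))).
Proof.
  intros Hx Hy Hz. unfold triArea.
  destruct (eq_iso x y || eq_iso y z || eq_iso z x) eqn:E; [|reflexivity].
  replace (Copp _) with (RtoC 0); [rewrite arg_0; ring|].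
  apply orb_prop in E as [E|E]; [apply orb_prop in E as [E|E]|].
  - rewrite (herm_eq_iso x y) by assumption. ring.
  - rewrite (herm_eq_iso y z) by assumption. ring.
  - rewrite (herm_eq_iso z x) by assumption. ring.
Qed.

Lemma triArea_edge_area x y z : inBbar x -> inBbar y -> inBbar z ->
  triArea x y z = edge_area x y + edge_area y z + edge_area z x.
Proof.
  intros Hx Hy Hz. unfold edge_area.
  rewrite triArea_herm, arg_herm3, arg_chart_form3 by auto using chart_in_disk. ring.
Qed.

Lemma edge_area_antisym x y : inBbar x -> inBbar y -> edge_area x y + edge_area y x = 0.
Proof.
  intros Hx Hy. unfold edge_area.
  pose proof (arg_chart_form_swap _ _ (chart_in_disk x Hx) (chart_in_disk y Hy)). lra.
Qed.

Lemma inBbar_act A x : unitaryW A -> inBbar x -> inBbar (act A x).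
Proof.
  intros HA [Hn Hr]. split.
  - intros E. apply Hn.
    assert (Hperp : forall y, herm x y = RtoC 0).
    { intros y. rewrite <- (HA x y), E. unfold herm; simpl. ring. }
    pose proof (Hperp (RtoC 1, RtoC 0)) as H1. pose proof (Hperp (RtoC 0, RtoC 1)) as H2.
    destruct x as [[a b] [c d]];
      unfold herm, RtoC, Cminus, Cplus, Copp, Cmult, Cconj in H1, H2; simpl in H1, H2.
    injection H1; injection H2; intros. unfold RtoC. f_equal; f_equal; lra.
  - rewrite HA. exact Hr.
Qed.

Lemma triArea_act A x y z : unitaryW A -> inBbar x -> inBbar y -> inBbar z ->
  triArea (act A x) (act A y) (act A z) = triArea x y z.
Proof.
  intros HA Hx Hy Hz. rewrite !triArea_herm by auto using inBbar_act. rewrite !HA. reflexivity.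
Qed.

(** * Sums around a polygon *)

Section CycleSum.
Context {A : Type}.

Fixpoint path_sum (g : A -> A -> R) (x : A) (l : list A) : R :=
  match l with
  | [] => 0
  | y :: l' => g x y + path_sum g y l'
  end.

Definition cycle_sum (g : A -> A -> R) (l : list A) : R :=
  match l with
  | [] => 0
  | x :: l' => path_sum g x (l' ++ [x])
  end.

Lemma last_cons (y d : A) l : last (y :: l) d = last l y.
Proof.
  revert y d. induction l as [|z l IH]; intros y d; [reflexivity|].
  change (last (z :: l) d = last (z :: l) y). rewrite !IH. reflexivity.
Qed.

Lemma path_sum_app g x l1 l2 :
  path_sum g x (l1 ++ l2) = path_sum g x l1 + path_sum g (last l1 x) l2.
Proof.
  revert x. induction l1 as [|y l1 IH]; intros x; [simpl; ring|].
  cbn [path_sum app]. rewrite IH, last_cons. ring.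
Qed.

Lemma cycle_sum_rotate1 g x l : cycle_sum g (x :: l) = cycle_sum g (l ++ [x]).
Proof.
  destruct l as [|y l]; [reflexivity|]. simpl.
  rewrite !path_sum_app, !last_last. simpl. ring.
Qed.

Lemma cycle_sum_cut g x y l1 l2 : g x y + g y x = 0 ->
  cycle_sum g (x :: l1 ++ y :: l2)
  = cycle_sum g (x :: l1 ++ [y]) + cycle_sum g (y :: l2 ++ [x]).
Proof.
  intros Hxy. cbn [cycle_sum]. rewrite <- !app_assoc. cbn [app].
  rewrite !path_sum_app. cbn [path_sum]. rewrite !path_sum_app. cbn [path_sum]. lra.
Qed.

Lemma cycle_sum_coboundary g h l :
  cycle_sum (fun x y => g x y + (h x - h y)) l = cycle_sum g l.
Proof.
  assert (Path : forall x l, path_sum (fun x y => g x y + (h x - h y)) x l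
                             = path_sum g x l + (h x - h (last l x))).
  { intros x0 l0. revert x0. induction l0 as [|y l0 IH]; intros x0; [simpl; ring|].
    cbn [path_sum]. rewrite IH, last_cons. ring. }
  destruct l as [|x l]; [reflexivity|]. simpl. rewrite Path, last_last. ring.
Qed.

Lemma path_sum_nth g d x l :
  path_sum g x l
  = fold_right Rplus 0 (map (fun k => g (nth k (x :: l) d) (nth k l d)) (seq 0 (length l))).
Proof.
  revert x. induction l as [|y l IH]; intros x; [reflexivity|].
  simpl length. rewrite <- cons_seq, <- seq_shift, map_cons, map_map. simpl.
  rewrite IH. reflexivity.
Qed.

Lemma cycle_sum_nth g d l :
  fold_right Rplus 0
    (map (fun k => g (nth k l d) (nth ((k + 1) mod length l) l d)) (seq 0 (length l)))
  = cycle_sum g l.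
Proof.
  destruct l as [|x l]; [reflexivity|]. simpl cycle_sum.
  rewrite (path_sum_nth g d), length_app, Nat.add_1_r. simpl length. f_equal.
  apply map_ext_in. intros k Hk. apply in_seq in Hk.
  rewrite app_comm_cons, app_nth1 by (simpl; lia). f_equal.
  destruct (Nat.eq_dec k (length l)) as [->|Hne].
  - rewrite nth_middle, Nat.add_1_r, Nat.Div0.mod_same. reflexivity.
  - rewrite app_nth1, Nat.mod_small by lia. rewrite Nat.add_1_r. reflexivity.
Qed.
End CycleSum.

Lemma path_sum_Forall2 {A B : Type} (Rel : A -> B -> Prop) g g' x x' l l' :
  (forall x x' y y', Rel x x' -> Rel y y' -> g x y = g' x' y') ->
  Rel x x' -> Forall2 Rel l l' -> path_sum g x l = path_sum g' x' l'.
Proof.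
  intros Hg Hx Hl. revert x x' Hx.
  induction Hl as [|y y' l l' Hy Hl IH]; intros x x' Hx; [reflexivity|].
  cbn [path_sum]. rewrite (Hg _ _ _ _ Hx Hy), (IH y y' Hy). reflexivity.
Qed.

Lemma cycle_sum_Forall2 {A B : Type} (Rel : A -> B -> Prop) g g' l l' :
  (forall x x' y y', Rel x x' -> Rel y y' -> g x y = g' x' y') ->
  Forall2 Rel l l' -> cycle_sum g l = cycle_sum g' l'.
Proof.
  intros Hg Hl. destruct Hl as [|x x' l l' Hx Hl]; [reflexivity|].
  apply (path_sum_Forall2 Rel); auto using Forall2_app.
Qed.

Lemma cycle_sum_ext_Forall {A : Type} (P : A -> Prop) g g' l :
  (forall x y, P x -> P y -> g x y = g' x y) -> Forall P l -> cycle_sum g l = cycle_sum g' l.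
Proof.
  intros Hg Hl. apply (cycle_sum_Forall2 (fun x x' => x = x' /\ P x)).
  - intros x x' y y' [<- Hx] [<- Hy]. auto.
  - induction Hl; constructor; auto.
Qed.

Lemma cycle_sum_map {A B : Type} (f : B -> A) g l :
  cycle_sum g (map f l) = cycle_sum (fun x y => g (f x) (f y)) l.
Proof.
  assert (Path : forall x l, path_sum g (f x) (map f l) = path_sum (fun x y => g (f x) (f y)) x l).
  { intros x0 l0. revert x0. induction l0; intros; simpl; congruence. }
  destruct l as [|x l]; [reflexivity|]. simpl. rewrite <- Path, map_app. reflexivity.
Qed.


(** * Polygon areas *)

Definition cscale (l : C) (v : vec) : vec := (Cmult l (fst v), Cmult l (snd v)).

Definition proj_equiv (u v : vec) : Prop := exists l, l <> RtoC 0 /\ u = cscale l v.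

Lemma proj_equiv_refl x : proj_equiv x x.
Proof.
  exists (RtoC 1). split; [exact C1_nz|].
  unfold cscale. rewrite !Cmult_1_l. destruct x; reflexivity.
Qed.

Lemma proj_equiv_sym x y : proj_equiv x y -> proj_equiv y x.
Proof.
  intros [l [Hl ->]]. exists (Cinv l). split.
  - intros E. apply C1_nz. rewrite <- (Cinv_l l Hl), E. ring.
  - destruct y. unfold cscale; simpl. f_equal; field; exact Hl.
Qed.

Lemma proj_equiv_trans x y z : proj_equiv x y -> proj_equiv y z -> proj_equiv x z.
Proof.
  intros [l [Hl ->]] [m [Hm ->]]. exists (Cmult l m). split; [apply Cmult_neq_0; auto|].
  unfold cscale; simpl. f_equal; ring.
Qed.

Lemma proj_equiv_act A x y : proj_equiv x y -> proj_equiv (act A x) (act A y).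
Proof.
  intros [l [Hl ->]]. exists l. split; [exact Hl|]. unfold act, cscale; simpl. f_equal; ring.
Qed.

Lemma chart_cscale l v : l <> RtoC 0 -> snd v <> RtoC 0 -> chart (cscale l v) = chart v.
Proof. intros Hl Hv. unfold chart, cscale; simpl. field. auto. Qed.

Lemma edge_area_proj x x' y y' : proj_equiv x x' -> proj_equiv y y' ->
  inBbar x' -> inBbar y' -> edge_area x y = edge_area x' y'.
Proof.
  intros [l [Hl ->]] [m [Hm ->]] Hx Hy. unfold edge_area.
  rewrite !chart_cscale by auto using inBbar_snd_neq0. reflexivity.
Qed.

Lemma act_mmul A B x : act (mmul A B) x = act A (act B x).
Proof. unfold act, mmul; simpl. f_equal; ring. Qed.

Lemma act_mscale l A x : act (mscale l A) x = cscale l (act A x).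
Proof. unfold act, mscale, cscale; simpl. f_equal; ring. Qed.

Lemma act_mid x : act mid x = x.
Proof. destruct x. unfold act, mid; simpl. f_equal; ring. Qed.

Lemma proj_equiv_peq A B x : peq A B -> proj_equiv (act A x) (act B x).
Proof. intros [l [Hl ->]]. rewrite act_mscale. exists l. auto. Qed.

Lemma polyArea_cycle_triArea c l : polyArea c l = cycle_sum (triArea c) l.
Proof. unfold polyArea. apply cycle_sum_nth. Qed.

(* Only [edge_area c _] depends on the base point, and it telescopes away. *)
Lemma polyArea_cycle_sum c l : inBbar c -> Forall inBbar l ->
  polyArea c l = cycle_sum edge_area l.
Proof.
  intros Hc Hl. rewrite polyArea_cycle_triArea, <- (cycle_sum_coboundary edge_area (edge_area c)).
  apply (cycle_sum_ext_Forall inBbar); auto.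
  intros x y Hx Hy. cbv beta. rewrite triArea_edge_area by auto.
  pose proof (edge_area_antisym y c Hy Hc). lra.
Qed.

Lemma inBbar_base : inBbar (RtoC 0, RtoC 1).
Proof.
  unfold inBbar, herm, RtoC, Re, Cminus, Cplus, Copp, Cmult, Cconj; simpl. split.
  - intros H. injection H. lra.
  - lra.
Qed.

Lemma cycle_area_act A l : unitaryW A -> Forall inBbar l ->
  cycle_sum edge_area (map (act A) l) = cycle_sum edge_area l.
Proof.
  intros HA Hl. pose proof inBbar_base as H0.
  assert (HAl : Forall inBbar (map (act A) l))
    by (apply Forall_map; eapply Forall_impl; [|exact Hl]; auto using inBbar_act).
  rewrite <- (polyArea_cycle_sum (act A (RtoC 0, RtoC 1))), <- (polyArea_cycle_sum (RtoC 0, RtoC 1))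
    by auto using inBbar_act.
  rewrite !polyArea_cycle_triArea, cycle_sum_map.
  apply (cycle_sum_ext_Forall inBbar); auto using triArea_act.
Qed.

Lemma cycle_area_proj l l' : Forall2 (fun x x' => proj_equiv x x' /\ inBbar x') l l' ->
  cycle_sum edge_area l = cycle_sum edge_area l'.
Proof.
  apply cycle_sum_Forall2. intros x x' y y' [Hx Hx'] [Hy Hy']. apply edge_area_proj; auto.
Qed.

Lemma Forall2_proj_refl l : Forall inBbar l ->
  Forall2 (fun x x' => proj_equiv x x' /\ inBbar x') l l.
Proof. induction 1; constructor; auto using proj_equiv_refl. Qed.

(* Cut along the diagonal [x0 y], move the half [y z .. x0] by [A], which maps its
   edge [y z] onto [x1 x0], and glue it back along that edge. *)
Lemma cycle_area_exchange A x0 x1 y z a b :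
  unitaryW A -> Forall inBbar (x0 :: x1 :: a ++ y :: z :: b) ->
  proj_equiv (act A y) x1 -> proj_equiv (act A z) x0 ->
  cycle_sum edge_area (x0 :: x1 :: a ++ y :: z :: b)
  = cycle_sum edge_area (x1 :: a ++ y :: act A z :: map (act A) b ++ [act A x0]).
Proof.
  intros HA Hall Hy Hz.
  assert (Hall' := Hall). rewrite !Forall_cons_iff, Forall_app, !Forall_cons_iff in Hall'.
  destruct Hall' as (H0 & H1 & Ha & Hy' & Hz' & Hb).
  assert (HAz : inBbar (act A z)) by auto using inBbar_act.
  assert (HAb : Forall inBbar (map (act A) b))
    by (apply Forall_map; eapply Forall_impl; [|exact Hb]; auto using inBbar_act).
  change (x0 :: x1 :: a ++ y :: z :: b) with (x0 :: (x1 :: a) ++ y :: (z :: b)).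
  rewrite (cycle_sum_cut edge_area x0 y) by auto using edge_area_antisym.
  replace (a ++ y :: act A z :: map (act A) b ++ [act A x0])
    with ((a ++ [y]) ++ act A z :: (map (act A) b ++ [act A x0]))
    by (rewrite <- app_assoc; reflexivity).
  rewrite (cycle_sum_cut edge_area x1 (act A z)) by auto using edge_area_antisym.
  f_equal.
  - rewrite cycle_sum_rotate1, <- !app_assoc. cbn [app]. symmetry. apply cycle_area_proj.
    constructor; [auto using proj_equiv_refl|].
    apply Forall2_app; [apply Forall2_proj_refl; exact Ha|].
    constructor; [auto using proj_equiv_refl|]. constructor; auto.
  - transitivity (cycle_sum edge_area (x1 :: act A z :: map (act A) b ++ [act A x0])).
    + rewrite <- (cycle_area_act A (y :: (z :: b) ++ [x0]) HA)
        by (constructor; auto; apply Forall_app; auto).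
      cbn [app map]. rewrite map_app. apply cycle_area_proj.
      constructor; [auto|]. apply Forall2_proj_refl.
      constructor; auto. apply Forall_app; auto using inBbar_act.
    + rewrite cycle_sum_rotate1. cbn [app]. rewrite <- app_assoc. reflexivity.
Qed.

(** * Words in [H_n] *)

Lemma Hstep_app n u v x y : Hstep n x y -> Hstep n (u ++ x ++ v) (u ++ y ++ v).
Proof.
  assert (Assoc : forall (u' s v' : word), u ++ (u' ++ s ++ v') ++ v = (u ++ u') ++ s ++ (v' ++ v))
    by (intros; rewrite <- !app_assoc; reflexivity).
  intros H. destruct H as [u' v' i | u' v' | u' v' i].
  - rewrite Assoc. change (u' ++ v') with (u' ++ [] ++ v'). rewrite Assoc. apply Hstep_sq.
  - rewrite Assoc. change (u' ++ v') with (u' ++ [] ++ v'). rewrite Assoc. apply Hstep_rel.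
  - rewrite !Assoc. apply Hstep_mod.
Qed.

Lemma Hequiv_app n u v x y : Hequiv n x y -> Hequiv n (u ++ x ++ v) (u ++ y ++ v).
Proof.
  induction 1.
  - apply rst_step, Hstep_app. assumption.
  - apply rst_refl.
  - apply rst_sym. assumption.
  - eapply rst_trans; eassumption.
Qed.

Add Parametric Relation (n : nat) : word (Hequiv n)
  reflexivity proved by (rst_refl _ _)
  symmetry proved by (rst_sym _ _)
  transitivity proved by (rst_trans _ _)
  as Hequiv_rel.

Add Parametric Morphism (n : nat) : (@app nat)
  with signature Hequiv n ==> Hequiv n ==> Hequiv n as app_Hequiv_morphism.
Proof.
  intros x x' Hx y y' Hy. transitivity (x' ++ y).
  - exact (Hequiv_app n [] y x x' Hx).
  - pose proof (Hequiv_app n x' [] y y' Hy) as H. rewrite !app_nil_r in H. exact H.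
Qed.

Add Parametric Morphism (n : nat) : (@cons nat)
  with signature eq ==> Hequiv n ==> Hequiv n as cons_Hequiv_morphism.
Proof.
  intros i x y H. pose proof (Hequiv_app n [i] [] x y H) as E. rewrite !app_nil_r in E. exact E.
Qed.

Lemma Hequiv_sq n i w : Hequiv n (i :: i :: w) w.
Proof. apply rst_step. exact (Hstep_sq n [] w i). Qed.

Lemma Hequiv_letter_succ n w : (2 <= n)%nat -> Hequiv n ((n + 1)%nat :: w) (1%nat :: w).
Proof.
  intros Hn. apply rst_step.
  replace (1%nat :: w) with ([] ++ [(n + 1) mod n] ++ w).
  - exact (Hstep_mod n [] w (n + 1)).
  - rewrite <- Nat.Div0.add_mod_idemp_l, Nat.Div0.mod_same, Nat.mod_small by lia. reflexivity.
Qed.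

(* [r_n r_(n-1) ... r_1 = 1] and [r_n^2 = 1] give [r_(n-1) ... r_1 = r_n]. *)
Lemma Hequiv_vword_pred n : (1 <= n)%nat -> Hequiv n (vword (n - 1)) [n].
Proof.
  intros Hn. rewrite <- (Hequiv_sq n n (vword (n - 1))).
  assert (Rel : relword n = n :: vword (n - 1)).
  { destruct n as [|m]; [lia|]. unfold relword, vword.
    rewrite seq_S, rev_app_distr. simpl. rewrite Nat.sub_0_r. reflexivity. }
  replace (n :: n :: vword (n - 1)) with ([n] ++ relword n ++ [])
    by (rewrite Rel, app_nil_r; reflexivity).
  apply rst_step. exact (Hstep_rel n [n] []).
Qed.

Definition shift (w : word) : word := map (fun j => (j + 1)%nat) w.

Lemma vword_succ i : vword (S i) = shift (vword i) ++ [1%nat].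
Proof.
  unfold shift, vword. rewrite <- cons_seq. cbn [rev]. f_equal.
  rewrite map_rev, <- seq_shift. f_equal. apply map_ext. intros. lia.
Qed.

Lemma shift_cons j w : shift (j :: w) = (j + 1)%nat :: shift w.
Proof. reflexivity. Qed.

Lemma shift_app u v : shift (u ++ v) = shift u ++ shift v.
Proof. apply map_app. Qed.

Lemma even_succ_negb k : Nat.even (S k) = negb (Nat.even k).
Proof. rewrite Nat.even_succ, Nat.negb_even. reflexivity. Qed.

Lemma evenw_app u v : evenw u -> evenw v -> evenw (u ++ v).
Proof. unfold evenw. rewrite length_app. apply Nat.Even_Even_add. Qed.

Lemma evenw_shift w : evenw w -> evenw (shift w).
Proof. unfold evenw, shift. rewrite length_map. auto. Qed.

Lemma evenw_wbase n i : evenw (wbase n i).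
Proof.
  unfold evenw, wbase, vword. apply Nat.even_spec.
  destruct (Nat.even i) eqn:E; rewrite ?length_app, length_rev, length_seq; simpl.
  - exact E.
  - rewrite Nat.add_1_r, Nat.even_succ, <- Nat.negb_even, E. reflexivity.
Qed.

Lemma evenw_wword n k : evenw (wword n k).
Proof.
  unfold wword. destruct (_ <=? _)%nat; [apply evenw_wbase|].
  pose proof (evenw_wbase n (k mod (2 * n - 2) - (n - 1))) as [j Hj].
  unfold evenw. rewrite !length_app, Hj. simpl. exists (S j). lia.
Qed.

Section Wwords.
Variable n : nat.
Hypothesis n_even : Nat.even n = true.
Hypothesis n_ge4 : (4 <= n)%nat.

Lemma wword_lower k : (k <= n - 2)%nat -> wword n k = wbase n k.
Proof.
  intros Hk. unfold wword. rewrite Nat.mod_small by lia.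
  replace (k <=? n - 2)%nat with true by (symmetry; apply Nat.leb_le; lia). reflexivity.
Qed.

Lemma wword_upper i : (i <= n - 2)%nat -> wword n (n - 1 + i) = n :: wbase n i ++ [n].
Proof.
  intros Hi. unfold wword. rewrite Nat.mod_small by lia.
  replace (n - 1 + i <=? n - 2)%nat with false by (symmetry; apply Nat.leb_gt; lia).
  replace (n - 1 + i - (n - 1))%nat with i by lia. reflexivity.
Qed.

Lemma wword_period : wword n (2 * n - 2) = [].
Proof. unfold wword. rewrite Nat.Div0.mod_same. reflexivity. Qed.

Lemma wword_one : wword n 1 = [1%nat; n].
Proof. rewrite wword_lower by lia. reflexivity. Qed.

Lemma wbase_even i : Nat.even i = true -> wbase n i = vword i.
Proof. unfold wbase. intros ->. reflexivity. Qed.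

Lemma wbase_odd i : Nat.even i = false -> wbase n i = vword i ++ [n].
Proof. unfold wbase. intros ->. reflexivity. Qed.

Lemma even_n_sub1 : Nat.even (n - 1) = false.
Proof.
  replace n with (S (n - 1))%nat in n_even by lia.
  rewrite even_succ_negb in n_even. now destruct (Nat.even (n - 1)).
Qed.

Lemma even_n_sub2 : Nat.even (n - 2) = true.
Proof.
  replace n with (S (S (n - 2)))%nat in n_even by lia. now rewrite Nat.even_succ_succ in n_even.
Qed.

Lemma even_upper i : Nat.even (n - 1 + i) = negb (Nat.even i).
Proof. rewrite Nat.even_add, even_n_sub1. now destruct (Nat.even i). Qed.

Lemma shift_wword_lower_even k : Nat.even k = true -> (k <= n - 2)%nat ->
  Hequiv n (shift (wword n k) ++ wword n 1) (wword n (S k)).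
Proof.
  intros Ek Hk. rewrite wword_lower, wbase_even, wword_one by assumption.
  change [1%nat; n] with ([1%nat] ++ [n]). rewrite app_assoc, <- vword_succ.
  destruct (Nat.eq_dec k (n - 2)%nat) as [->|Hne].
  - replace (S (n - 2)) with (n - 1 + 0)%nat by lia.
    rewrite wword_upper by lia. replace (n - 1 + 0)%nat with (n - 1)%nat by lia.
    rewrite Hequiv_vword_pred by lia. reflexivity.
  - rewrite wword_lower, wbase_odd by (rewrite ?even_succ_negb, ?Ek; auto; lia).
    reflexivity.
Qed.

Lemma shift_wword_lower_odd k : Nat.even k = false -> (k <= n - 2)%nat ->
  Hequiv n (shift (wword n k)) (wword n (S k)).
Proof.
  intros Ek Hk.
  assert (k <> n - 2)%nat by (intros ->; rewrite even_n_sub2 in Ek; discriminate).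
  rewrite wword_lower, wbase_odd, (wword_lower (S k)), wbase_even, vword_succ
    by (rewrite ?even_succ_negb, ?Ek; auto; lia).
  rewrite shift_app, shift_cons, Hequiv_letter_succ by lia. reflexivity.
Qed.

Lemma shift_wword_upper_odd k : Nat.even k = false -> (n - 1 <= k <= 2 * n - 3)%nat ->
  Hequiv n (shift (wword n k)) (wword n 1 ++ wword n (S k)).
Proof.
  intros Ek Hk. replace k with (n - 1 + (k - (n - 1)))%nat in * by lia.
  set (i := (k - (n - 1))%nat) in *.
  assert (Ei : Nat.even i = true)
    by (rewrite even_upper in Ek; now destruct (Nat.even i)).
  rewrite wword_upper, wbase_even, wword_one by (auto; lia).
  rewrite shift_cons, shift_app, shift_cons, !Hequiv_letter_succ, <- vword_succ by lia.
  destruct (Nat.eq_dec i (n - 2)%nat) as [Hi|Hi].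
  - replace (S (n - 1 + i)) with (2 * n - 2)%nat by lia. rewrite wword_period.
    replace (S i) with (n - 1)%nat by lia. rewrite Hequiv_vword_pred by lia. reflexivity.
  - replace (S (n - 1 + i)) with (n - 1 + S i)%nat by lia.
    rewrite wword_upper, wbase_odd by (rewrite ?even_succ_negb, ?Ei; auto; lia).
    simpl. rewrite (Hequiv_sq n n), <- app_assoc. simpl. rewrite (Hequiv_sq n n []), app_nil_r.
    reflexivity.
Qed.

Lemma shift_wword_upper_even k : Nat.even k = true -> (n - 1 <= k <= 2 * n - 3)%nat ->
  Hequiv n (shift (wword n k) ++ wword n 1) (wword n 1 ++ wword n (S k)).
Proof.
  intros Ek Hk. replace k with (n - 1 + (k - (n - 1)))%nat in * by lia.
  set (i := (k - (n - 1))%nat) in *.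
  assert (Ei : Nat.even i = false)
    by (rewrite even_upper in Ek; now destruct (Nat.even i)).
  assert (i <> n - 2)%nat by (intros Hi; rewrite Hi, even_n_sub2 in Ei; discriminate).
  replace (S (n - 1 + i)) with (n - 1 + S i)%nat by lia.
  rewrite !wword_upper, wbase_odd, wbase_even, wword_one
    by (rewrite ?even_succ_negb, ?Ei; auto; lia).
  rewrite shift_cons, !shift_app, !shift_cons. simpl. rewrite <- !app_assoc. simpl.
  rewrite (Hequiv_sq n (n + 1)), !Hequiv_letter_succ, (Hequiv_sq n n) by lia.
  change [1%nat; n] with ([1%nat] ++ [n]). rewrite app_assoc, <- vword_succ. reflexivity.
Qed.

Lemma wword_half : Hequiv n (wword n (n - 1)) [].
Proof.
  replace (n - 1)%nat with (n - 1 + 0)%nat by lia. rewrite wword_upper by lia.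
  apply Hequiv_sq.
Qed.

Lemma wword_one_half : Hequiv n (wword n 1 ++ wword n n) [].
Proof.
  replace (wword n n) with (wword n (n - 1 + 1)) by (f_equal; lia).
  rewrite wword_one, wword_upper by lia.
  simpl. rewrite !Hequiv_sq. reflexivity.
Qed.
End Wwords.

(** * The polygon of [Area_n] *)

Section Representation.
Context {n : nat} {rho : word -> M2} (Hrho : is_Grep n rho).

Lemma rep_unitary w : evenw w -> unitaryW (rho w).
Proof. destruct Hrho as (H & _). apply H. Qed.

Lemma rep_nil x : proj_equiv (act (rho []) x) x.
Proof.
  destruct Hrho as (_ & H & _). rewrite <- (act_mid x) at 2. apply proj_equiv_peq, H.
Qed.

Lemma rep_app u v x : evenw u -> evenw v ->
  proj_equiv (act (rho (u ++ v)) x) (act (rho u) (act (rho v) x)).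
Proof.
  intros Hu Hv. destruct Hrho as (_ & _ & H & _).
  rewrite <- act_mmul. apply proj_equiv_peq, H; assumption.
Qed.

Lemma rep_Hequiv u v x : evenw u -> Hequiv n u v ->
  proj_equiv (act (rho u) x) (act (rho v) x).
Proof. intros Hu Huv. destruct Hrho as (_ & _ & _ & H). apply proj_equiv_peq, H; assumption. Qed.
End Representation.

Definition point (n : nat) (rho : word -> M2) (p q : vec) (k : nat) : vec :=
  act (rho (wword n k)) (if Nat.even k then p else q).

Lemma Apoints_inBbar n rho p q : (forall w, evenw w -> unitaryW (rho w)) ->
  inBbar p -> inBbar q -> Forall inBbar (Apoints n rho p q).
Proof.
  intros Hrho Hp Hq. apply Forall_map, Forall_forall. intros k _.
  apply inBbar_act; [apply Hrho, evenw_wword | destruct (Nat.even k); assumption].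
Qed.

Lemma Forall2_map_seq {A B : Type} (Rel : A -> B -> Prop) f g s len :
  (forall k, (s <= k < s + len)%nat -> Rel (f k) (g (S k))) ->
  Forall2 Rel (map f (seq s len)) (map g (seq (S s) len)).
Proof.
  revert s. induction len as [|len IH]; intros s H; constructor.
  - apply H. lia.
  - apply IH. intros. apply H. lia.
Qed.

Section Points.
Variables (n : nat) (rho : word -> M2) (p q : vec).
Hypothesis n_even : Nat.even n = true.
Hypothesis n_ge4 : (4 <= n)%nat.
Hypothesis Hrho : is_Grep n rho.
Hypothesis Hp : inBbar p.
Hypothesis Hq : inBbar q.

Let G := rho (wword n 1).
Let P := point n rho p q.
Let Q := point n (rhoS 1 rho) (act G q) p.

#[local] Hint Resolve evenw_wword evenw_shift evenw_app : core.

Lemma G_unitary : unitaryW G.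
Proof. apply (rep_unitary Hrho). auto. Qed.

Lemma inBbar_P k : inBbar (P k).
Proof. apply inBbar_act; [apply (rep_unitary Hrho); auto | destruct (Nat.even k); assumption]. Qed.

Lemma inBbar_GP k : inBbar (act G (P k)).
Proof. apply inBbar_act; [exact G_unitary | apply inBbar_P]. Qed.

Lemma P_period : P (2 * n - 2) = P 0.
Proof.
  unfold P, point. rewrite wword_period, (wword_lower n n_ge4 0) by lia.
  replace (2 * n - 2)%nat with (0 + 2 * (n - 1))%nat by lia.
  rewrite Nat.even_add_mul_2. reflexivity.
Qed.

Lemma P_zero : proj_equiv (P 0) p.
Proof. unfold P, point. rewrite wword_lower by lia. apply (rep_nil Hrho). Qed.

Lemma P_half : proj_equiv (P (n - 1)) q.
Proof.
  unfold P, point. rewrite even_n_sub1 by assumption.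
  eapply proj_equiv_trans; [apply (rep_Hequiv Hrho _ []) | apply (rep_nil Hrho)]; auto.
  apply wword_half; assumption.
Qed.

Lemma G_P_n : proj_equiv (act G (P n)) p.
Proof.
  unfold G, P, point. rewrite n_even.
  eapply proj_equiv_trans; [apply proj_equiv_sym, (rep_app Hrho); auto|].
  eapply proj_equiv_trans; [apply (rep_Hequiv Hrho _ []) | apply (rep_nil Hrho)]; auto.
  apply wword_one_half; assumption.
Qed.

Lemma Q_lower k : (k <= n - 2)%nat -> proj_equiv (Q k) (P (S k)).
Proof.
  intros Hk. unfold Q, P, G, point, rhoS. fold (shift (wword n k)).
  rewrite even_succ_negb. destruct (Nat.even k) eqn:Ek; cbn [negb].
  - eapply proj_equiv_trans; [apply proj_equiv_sym, (rep_app Hrho); auto|].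
    apply (rep_Hequiv Hrho); [auto | apply shift_wword_lower_even; assumption].
  - apply (rep_Hequiv Hrho); [auto | apply shift_wword_lower_odd; assumption].
Qed.

Lemma Q_upper k : (n - 1 <= k <= 2 * n - 3)%nat -> proj_equiv (Q k) (act G (P (S k))).
Proof.
  intros Hk. unfold Q, P, G, point, rhoS. fold (shift (wword n k)).
  rewrite even_succ_negb. destruct (Nat.even k) eqn:Ek; cbn [negb].
  - eapply proj_equiv_trans; [apply proj_equiv_sym, (rep_app Hrho); auto|].
    eapply proj_equiv_trans; [apply (rep_Hequiv Hrho) | apply (rep_app Hrho)]; auto.
    apply shift_wword_upper_even; assumption.
  - eapply proj_equiv_trans; [apply (rep_Hequiv Hrho) | apply (rep_app Hrho)]; auto.
    apply shift_wword_upper_odd; assumption.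
Qed.

Lemma Apoints_split :
  Apoints n rho p q
  = P 0 :: P 1 :: map P (seq 2 (n - 3)) ++ P (n - 1) :: P n :: map P (seq (S n) (n - 3)).
Proof.
  change (Apoints n rho p q) with (map P (seq 0 (2 * n - 2))).
  replace (2 * n - 2)%nat with (2 + ((n - 3) + (2 + (n - 3))))%nat by lia.
  rewrite !seq_app, !map_app.
  replace (0 + 2 + (n - 3))%nat with (n - 1)%nat by lia.
  replace (n - 1 + 2)%nat with (S n) by lia.
  cbn [seq map app]. replace (S (n - 1)) with n by lia. reflexivity.
Qed.

Lemma Apoints_shift_equiv :
  Forall2 (fun x x' => proj_equiv x x' /\ inBbar x') (Apoints n (rhoS 1 rho) (act G q) p)
    (P 1 :: map P (seq 2 (n - 3)) ++ P (n - 1) :: act G (P n)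
       :: map (act G) (map P (seq (S n) (n - 3))) ++ [act G (P 0)]).
Proof.
  change (Apoints n (rhoS 1 rho) (act G q) p) with (map Q (seq 0 (2 * n - 2))).
  replace (2 * n - 2)%nat with (1 + ((n - 3) + (2 + ((n - 3) + 1))))%nat by lia.
  rewrite !seq_app, !map_app, map_map, <- P_period.
  replace (0 + 1 + (n - 3))%nat with (n - 2)%nat by lia.
  replace (n - 2 + 2)%nat with n by lia.
  replace (n + (n - 3))%nat with (2 * n - 3)%nat by lia.
  cbn [seq map app].
  constructor; [split; [apply Q_lower; lia | apply inBbar_P]|].
  apply Forall2_app; [apply Forall2_map_seq; intros; split; [apply Q_lower; lia | apply inBbar_P]|].
  constructor; [split; [|apply inBbar_P]|].
  { replace (P (n - 1)) with (P (S (n - 2))) by (f_equal; lia). apply Q_lower. lia. }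
  constructor; [split; [|apply inBbar_GP]|].
  { replace (S (n - 2)) with (n - 1)%nat by lia.
    replace (P n) with (P (S (n - 1))) by (f_equal; lia). apply Q_upper. lia. }
  apply Forall2_app;
    [apply Forall2_map_seq; intros; split; [apply Q_upper; lia | apply inBbar_GP]|].
  constructor; [|constructor]. split; [|apply inBbar_GP].
  replace (P (2 * n - 2)) with (P (S (2 * n - 3))) by (f_equal; lia). apply Q_upper. lia.
Qed.

Lemma Apoints_cycle_area :
  cycle_sum edge_area (Apoints n rho p q)
  = cycle_sum edge_area (Apoints n (rhoS 1 rho) (act G q) p).
Proof.
  rewrite (cycle_area_proj _ _ Apoints_shift_equiv), Apoints_split.
  apply cycle_area_exchange.
  - exact G_unitary.
  - rewrite <- Apoints_split. apply Apoints_inBbar; [exact (rep_unitary Hrho)|..]; assumption.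
  - apply proj_equiv_act, P_half.
  - eapply proj_equiv_trans; [exact G_P_n | apply proj_equiv_sym, P_zero].
Qed.
End Points.

Theorem lemma5p5 :
  forall (n : nat), Nat.Even n -> (6 <= n)%nat ->
  forall rho : word -> M2, is_Grep n rho ->
  forall p q : vec, inBbar p -> inBbar q ->
  forall c c' : vec, inBbar c -> inBbar c' ->
    Area_n c n rho p q = Area_i c' 1 n rho (act (rho (wword n 1)) q) p.
Proof.
  intros n Hn H6 rho Hrho p q Hp Hq c c' Hc Hc'.
  apply Nat.even_spec in Hn.
  assert (HG : unitaryW (rho (wword n 1))) by apply (rep_unitary Hrho), evenw_wword.
  unfold Area_i, Area_n.
  rewrite !polyArea_cycle_sum; auto.
  - apply Apoints_cycle_area; auto. lia.
  - apply Apoints_inBbar; auto using inBbar_act.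
    intros w Hw. apply (rep_unitary Hrho), evenw_shift, Hw.
  - apply Apoints_inBbar; [exact (rep_unitary Hrho)|..]; assumption.
Qed.
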